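(* Let $L:\mathbb{R}^k\to\mathbb{R}^{m+1}$ be a linear map such that $t(L)<t(L_{[m]})$. Then \[ t(L)\leq \max\left\{ \tfrac34\, t(L_{[m]}),\ t(L_{[m]})-2^{k-s-1}\right\},\] where $s=|S(L_{[m]})|$.
   Context: $\mathbb{H}^n=\{0,1\}^n$, $e_1,\dots,e_k$ the standard basis of $\mathbb{R}^k$. For a linear map $L:\mathbb{R}^k\to\mathbb{R}^n$, $t(L)=|L^{-1}(\mathbb{H}^n)\cap\mathbb{H}^k|$ and $S(L)=\{i\in[k]:L(e_i)\neq0\}$. For $A\subseteq[m+1]$, $L_A=\pi_A\circ L:\mathbb{R}^k\to\mathbb{R}^{|A|}$, where $\pi_A$ is the projection onto the coordinates in $A$; in particular $L_{[m]}$ consists of the first $m$ coordinates of $L$. *)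

From HB Require Import structures.
From mathcomp Require Import all_boot all_order all_algebra.
From mathcomp Require Import reals.
Set Implicit Arguments. Unset Strict Implicit. Unset Printing Implicit Defensive.
Import Order.TTheory GRing.Theory Num.Theory.
Local Open Scope ring_scope.

(* A linear map R^k -> R^n is represented by its matrix L : 'M[R]_(n, k),
   acting on column vectors x : 'cV_k by x |-> L *m x. *)

Definition bvec (R : realType) (k : nat) (b : {ffun 'I_k -> bool}) : 'cV[R]_k :=
  \col_i (b i)%:R.

Definition in_cube (R : realType) (n : nat) (v : 'cV[R]_n) : bool :=
  [forall i, (v i 0 == 0) || (v i 0 == 1)].

Definition tcount (R : realType) (n k : nat) (L : 'M[R]_(n, k)) : nat :=
  #|[set b : {ffun 'I_k -> bool} | in_cube (L *m bvec R b)]|.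

Definition supp (R : realType) (n k : nat) (L : 'M[R]_(n, k)) : {set 'I_k} :=
  [set i : 'I_k | col i L != 0].

Definition firstm (R : realType) (m k : nat) (L : 'M[R]_(m.+1, k)) : 'M[R]_(m, k) :=
  \matrix_(i < m, j < k) L (widen_ord (leqnSn m) i) j.

From HB Require Import structures.
From mathcomp Require Import all_boot all_order all_algebra.
From mathcomp Require Import reals.
From mathcomp Require Import lra zify.
Import Order.TTheory GRing.Theory Num.Theory.
Local Open Scope ring_scope.
Set Implicit Arguments. Unset Strict Implicit. Unset Printing Implicit Defensive.

(* Let T be the set of b in {0,1}^k with L_[m] b in {0,1}^m, and G the subset
   of those with L b in {0,1}^(m+1).  Toggling coordinates j outside
   S(L_[m]) never leaves T; call such j free.  If at most one free column of L
   is nonzero, then at least k - s - 1 columns of L vanish, and toggling them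
   at any point of the nonempty set T \ G stays in T \ G, which therefore has
   at least 2^(k-s-1) elements.  Otherwise pick two free columns i, j with
   nonzero last entries: toggling i and j shifts the last coordinate of L b by
   nonzero amounts a and c, and v, v + a, v + c, v + a + c cannot all lie in
   {0,1}.  So every square {b, b^i, b^j, b^ij} with b in T misses G at least
   once, and double counting gives 4 |G| <= 3 |T|. *)

Lemma sum_mem_card (aT : finType) (A : {pred aT}) : (\sum_b (b \in A) = #|A|)%N.
Proof.
by rewrite -sum1_card [RHS]big_mkcond; apply: eq_bigr => b _; case: (b \in A).
Qed.

Lemma widen_ord_max m (r : 'I_m) : widen_ord (leqnSn m) r = lift ord_max r.
Proof. by apply: val_inj; rewrite /= /bump leqNgt ltn_ord. Qed.

Lemma forall_ord_max m (P : pred 'I_m.+1) :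
  [forall r, P r] = [forall r : 'I_m, P (widen_ord (leqnSn m) r)] && P ord_max.
Proof.
apply/forallP/andP => [allP | [/forallP allP Pmax] r].
  by split; [apply/forallP => r |]; apply: allP.
by case: (unliftP ord_max r) => [r'|] ->; rewrite -?widen_ord_max.
Qed.

Section DoubleCounting.
Variables (I aT : finType) (S : {set I}) (p : I -> aT -> aT) (G T : {set aT}).
Hypothesis sGT : G \subset T.
Hypothesis p_inj : forall x, x \in S -> injective (p x).
Hypothesis p_stable : forall x b, x \in S -> (p x b \in T) = (b \in T).
Hypothesis not_all_in : forall b, b \in T -> ~~ [forall x in S, p x b \in G].

Lemma card_le_not_all_in : (#|S| * #|G| <= #|S|.-1 * #|T|)%N.
Proof.
have sum_le b : (\sum_(x in S) (p x b \in G) <= #|S|.-1 * (b \in T))%N.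
  case: (boolP (b \in T)) => [bT|bNT]; last first.
    rewrite muln0 leqn0 sum_nat_eq0; apply/forall_inP => x Sx; rewrite eqb0.
    by apply: contra bNT => /(subsetP sGT); rewrite p_stable.
  have /forall_inPn[x0 Sx0 x0NG] := not_all_in bT.
  rewrite muln1 (bigD1 x0) //= (negbTE x0NG) add0n.
  have -> : #|S|.-1 = (\sum_(i in S | i != x0) 1)%N.
    by rewrite sum1_card (cardD1 x0 S) Sx0; apply: eq_card => x; rewrite !inE andbC.
  by apply: leq_sum => x _; apply: leq_b1.
have sum_countE : (\sum_b \sum_(x in S) (p x b \in G) = #|S| * #|G|)%N.
  rewrite exchange_big /= -sum1_card big_distrl /=; apply: eq_bigr => x Sx.
  rewrite mul1n -(card_preimset G (p_inj Sx)) -sum_mem_card.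
  by apply: eq_bigr => b _; rewrite inE.
rewrite -sum_countE -(sum_mem_card T) big_distrr /=.
by apply: leq_sum => b _.
Qed.
End DoubleCounting.

Definition toggle (k : nat) (X : {set 'I_k}) (b : {ffun 'I_k -> bool}) :
    {ffun 'I_k -> bool} :=
  [ffun j => (j \in X) (+) b j].

Lemma toggleK k (X : {set 'I_k}) : involutive (toggle X).
Proof. by move=> b; apply/ffunP => j; rewrite !ffunE addbA addbb. Qed.

Lemma toggle_inj k (b : {ffun 'I_k -> bool}) : injective (fun X => toggle X b).
Proof.
move=> X Y /ffunP eqXY; apply/setP => j.
by have := eqXY j; rewrite !ffunE => /addIb.
Qed.

Lemma toggle0 k (b : {ffun 'I_k -> bool}) : toggle set0 b = b.
Proof. by apply/ffunP => j; rewrite ffunE inE. Qed.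

Lemma toggle2 k (i j : 'I_k) (b : {ffun 'I_k -> bool}) : i != j ->
  toggle [set i; j] b = toggle [set i] (toggle [set j] b).
Proof.
move=> ij; apply/ffunP => l; rewrite !ffunE !inE addbA.
by case: (eqVneq l i) => [->|]; rewrite ?(negbTE ij).
Qed.

Section BitVectors.
Variable R : realType.

Definition is_bit (x : R) := (x == 0) || (x == 1).

Definition zero_cols n k (M : 'M[R]_(n, k)) : {set 'I_k} := [set j | col j M == 0].

Lemma not_all_bit_square (v a c : R) : a != 0 -> c != 0 ->
  ~~ [&& is_bit v, is_bit (v + a), is_bit (v + c) & is_bit (v + a + c)].
Proof.
rewrite !neq_lt /is_bit => /orP[]a0 /orP[]c0; apply/negP;
by move=> /and4P[] /orP[]/eqP v01 /orP[]/eqP va01 /orP[]/eqP vc01 /orP[]/eqP vac01; lra.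
Qed.

Lemma mulmx_bvec_toggle_zero n k (M : 'M[R]_(n, k)) (X : {set 'I_k}) b :
  X \subset zero_cols M -> M *m bvec R (toggle X b) = M *m bvec R b.
Proof.
move=> /subsetP X0; apply/matrixP => r c; rewrite !mxE; apply: eq_bigr => j _.
rewrite !mxE ffunE; case: (boolP (j \in X)) => [/X0 | _] //.
by rewrite inE => /eqP/matrixP/(_ r 0); rewrite !mxE => ->; rewrite !mul0r.
Qed.

Lemma mulmx_bvec_toggle1 n k (M : 'M[R]_(n, k)) (i : 'I_k) b r :
  (M *m bvec R (toggle [set i] b)) r 0 =
    (M *m bvec R b) r 0 + (-1) ^+ b i * M r i.
Proof.
rewrite !mxE (bigD1 i) //= [in RHS](bigD1 i) //= !mxE ffunE inE eqxx.
rewrite (eq_bigr (fun j => M r j * bvec R b j 0)) => [|j /negbTE ji].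
  by case: (b i); rewrite /= ?expr1 ?expr0; lra.
by rewrite !mxE ffunE inE ji.
Qed.

Lemma card_bvec_fiber n k (M : 'M[R]_(n, k)) (P : pred 'cV[R]_n)
    (b0 : {ffun 'I_k -> bool}) :
  P (M *m bvec R b0) ->
  (2 ^ #|zero_cols M| <= #|[set b | P (M *m bvec R b)]|)%N.
Proof.
move=> Pb0; rewrite -card_powerset -(card_imset _ (toggle_inj (b:=b0))).
apply/subset_leq_card/subsetP => _ /imsetP[X + ->]; rewrite !inE => X0.
by rewrite mulmx_bvec_toggle_zero.
Qed.

Lemma col_eq0 n k (M : 'M[R]_(n, k)) (j : 'I_k) :
  (col j M == 0) = [forall r, M r j == 0].
Proof.
apply/eqP/forallP => [/matrixP M0 r | M0].
  by have := M0 r 0; rewrite !mxE => ->.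
by apply/matrixP => r c; rewrite !mxE; apply/eqP.
Qed.

Definition cube_preim n k (M : 'M[R]_(n, k)) : {set {ffun 'I_k -> bool}} :=
  [set b | in_cube (M *m bvec R b)].

Lemma tcountE n k (M : 'M[R]_(n, k)) : tcount M = #|cube_preim M|.
Proof. by []. Qed.

Lemma card_zero_cols n k (M : 'M[R]_(n, k)) : #|zero_cols M| = (k - #|supp M|)%N.
Proof.
have -> : zero_cols M = ~: supp M by apply/setP => j; rewrite !inE negbK.
by rewrite -[k in (k - _)%N](card_ord k) -(cardsC (supp M)) addKn.
Qed.

End BitVectors.

Section FirstRows.
Variables (R : realType) (m k : nat) (L : 'M[R]_(m.+1, k)).

Lemma firstm_mulmx p (M : 'M[R]_(k, p)) : firstm (L *m M) = firstm L *m M.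
Proof. by apply/matrixP => i j; rewrite !mxE; apply: eq_bigr => l _; rewrite mxE. Qed.

Lemma in_cube_firstm (v : 'cV[R]_m.+1) :
  in_cube v = in_cube (firstm v) && is_bit (v ord_max 0).
Proof.
by rewrite /in_cube forall_ord_max; under [in RHS]eq_forallb do rewrite mxE.
Qed.

Lemma cube_preim_firstm :
  cube_preim L =
    [set b in cube_preim (firstm L) | is_bit ((L *m bvec R b) ord_max 0)].
Proof. by apply/setP => b; rewrite !inE in_cube_firstm firstm_mulmx. Qed.

Lemma cube_preim_firstm_sub : cube_preim L \subset cube_preim (firstm L).
Proof. by rewrite cube_preim_firstm; apply/subsetP => b; rewrite inE => /andP[]. Qed.

Lemma zero_cols_firstm :
  zero_cols L = [set j in zero_cols (firstm L) | L ord_max j == 0].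
Proof.
apply/setP => j; rewrite !inE !col_eq0 forall_ord_max.
by under [in RHS]eq_forallb do rewrite mxE.
Qed.

Lemma zero_cols_firstm_sub : zero_cols L \subset zero_cols (firstm L).
Proof. by rewrite zero_cols_firstm; apply/subsetP => j; rewrite inE => /andP[]. Qed.

Lemma tcount_gap : (tcount L < tcount (firstm L))%N ->
  (2 ^ #|zero_cols L| + tcount L <= tcount (firstm L))%N.
Proof.
rewrite !tcountE; set T := cube_preim (firstm L); set G := cube_preim L => ltGT.
have cardT : #|T| = (#|G| + #|T :\: G|)%N.
  by rewrite -(cardsID G T) (setIidPr cube_preim_firstm_sub).
have [b0 b0TG] : exists b0, b0 \in T :\: G by apply/card_gt0P; lia.
pose P (v : 'cV[R]_m.+1) := in_cube (firstm v) && ~~ is_bit (v ord_max 0).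
have TGE : T :\: G = [set b | P (L *m bvec R b)].
  apply/setP => b; rewrite /G cube_preim_firstm !inE /P firstm_mulmx.
  by case: (in_cube _); case: (is_bit _).
rewrite TGE inE in b0TG cardT; rewrite cardT addnC leq_add2l.
exact: (card_bvec_fiber b0TG).
Qed.

Lemma tcount_three_quarters (i j : 'I_k) : i != j ->
  i \in zero_cols (firstm L) :\: zero_cols L ->
  j \in zero_cols (firstm L) :\: zero_cols L ->
  (4 * tcount L <= 3 * tcount (firstm L))%N.
Proof.
have memD l : l \in zero_cols (firstm L) :\: zero_cols L ->
    (l \in zero_cols (firstm L)) && (L ord_max l != 0).
  rewrite zero_cols_firstm !inE.
  by case: (L ord_max l == 0); rewrite ?andbF ?andbT ?andNb.
move=> ij /memD/andP[Ai Li] /memD/andP[Aj Lj]; set T := cube_preim (firstm L).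
have ij0 : [set i; j] \subset zero_cols (firstm L) by rewrite subUset !sub1set Ai.
have := @card_le_not_all_in _ _ (powerset [set i; j]) (@toggle k) (cube_preim L) T.
rewrite card_powerset cards2 ij !tcountE; apply.
- exact: cube_preim_firstm_sub.
- by move=> X _; apply: can_inj (toggleK X).
- move=> X b; rewrite powersetE => Xij; rewrite !inE mulmx_bvec_toggle_zero //.
  exact: subset_trans ij0.
move=> b bT; apply/forall_inP => allG.
have lastE (X : {set 'I_k}) : X \subset [set i; j] ->
    is_bit ((L *m bvec R (toggle X b)) ord_max 0).
  move=> Xij; have := allG X.
  by rewrite powersetE cube_preim_firstm inE => /(_ Xij)/andP[].
have sgnL l : L ord_max l != 0 -> (-1) ^+ b l * L ord_max l != 0.
  by move=> Ll; rewrite mulf_neq0 // signr_eq0.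
have bi : toggle [set j] b i = b i by rewrite ffunE inE (negbTE ij).
have := not_all_bit_square ((L *m bvec R b) ord_max 0) (sgnL i Li) (sgnL j Lj).
have := lastE _ (sub0set _); rewrite toggle0 => ->.
have := lastE [set i]; rewrite mulmx_bvec_toggle1 sub1set !inE eqxx => -> //.
have := lastE [set j]; rewrite mulmx_bvec_toggle1 sub1set !inE eqxx orbT => -> //.
by have := lastE _ (subxx _); rewrite toggle2 // !mulmx_bvec_toggle1 bi addrAC => ->.
Qed.

End FirstRows.

Theorem lemma4p2 (R : realType) (m k : nat) (L : 'M[R]_(m.+1, k)) :
  (tcount L < tcount (firstm L))%N ->
  (tcount L)%:R <=
    Num.max (3 / 4 * (tcount (firstm L))%:R)
            ((tcount (firstm L))%:R
               - (2 : R) ^ ((k%:Z - (#|supp (firstm L)|)%:Z - 1)%R)).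
Proof.
move=> ltLA; set s := #|supp (firstm L)|.
have sk : (s <= k)%N by rewrite -[k in (_ <= k)%N]card_ord max_card.
have -> : (2 : R) ^ (k%:Z - s%:Z - 1) = 2 ^+ (k - s) / 2.
  by rewrite subzn // expfzDr ?pnatr_eq0.
set D := zero_cols (firstm L) :\: zero_cols L.
have cardD : (#|zero_cols L| + #|D| = k - s)%N.
  rewrite cardsD (setIidPr (zero_cols_firstm_sub L)) subnKC -?card_zero_cols //.
  exact: subset_leq_card (zero_cols_firstm_sub L).
rewrite le_max; case: (leqP #|D| 1) => [D_le1 | /card_gt1P[i [j [Di Dj ij]]]].
  have gap2 : (2 ^ (k - s) + 2 * tcount L <= 2 * tcount (firstm L))%N.
    have : (2 ^ (k - s) <= 2 * 2 ^ #|zero_cols L|)%N.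
      by rewrite -expnS leq_exp2l //; lia.
    by have := tcount_gap ltLA; lia.
  move: gap2; rewrite -(ler_nat R) natrD !natrM natrX => gap2.
  by apply/orP; right; lra.
have := tcount_three_quarters ij Di Dj.
by rewrite -(ler_nat R) !natrM => le43; apply/orP; left; lra.
Qed.
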